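(* Let $0<E<F$ and $h(z)=1-(1-z)^3$. For $x>F/2$ define $$\rho(x)=\frac{\min\{h(z):z\in[E/x,F/x]\}}{\max\{h(z):z\in[E/x,F/x]\}} .$$ Then $\rho$ attains its maximum over $x\in(F/2,\infty)$ at $$x=\frac13(E+F)+\frac13\sqrt{\tfrac12(E^2+F^2)+\tfrac12(F-E)^2}.$$
   Context: Interpretation: in the dual-window iteration $\gamma_{k+1}=3\gamma_k-3S_kg+SS_k\gamma_k$ (with $S$, $S_k$ the frame operators of $(g,a,b)$, $(\gamma_k,a,b)$), the operators $Z_k=(SS_k)^{1/2}$ satisfy $Z_{k+1}=h(Z_k)$; if $Z_0=S$ has spectrum $[E,F]$ and is rescaled to $S/x$, $\rho(x)$ is the ratio of the minimum to the maximum of the spectrum after one step. *)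

From HB Require Import structures.
From mathcomp Require Import all_boot all_order all_algebra.
From mathcomp Require Import classical_sets reals.
Set Implicit Arguments. Unset Strict Implicit. Unset Printing Implicit Defensive.
Import Order.TTheory GRing.Theory Num.Theory.
Local Open Scope classical_set_scope.
Local Open Scope ring_scope.

Definition h_fun (R : realType) (z : R) : R := 1 - (1 - z) ^+ 3.

Definition h_image (R : realType) (a b : R) : set R :=
  [set h_fun z | z in [set z : R | a <= z <= b]].

(* rho(x) = min{h(z) : z in [E/x,F/x]} / max{h(z) : z in [E/x,F/x]};
   h is continuous, so min/max over the compact interval are inf/sup. *)
Definition rho (R : realType) (E F x : R) : R :=
  inf (h_image (E / x) (F / x)) / sup (h_image (E / x) (F / x)).

Definition x_opt (R : realType) (E F : R) : R :=
  (E + F) / 3 + Num.sqrt ((E ^+ 2 + F ^+ 2) / 2 + (F - E) ^+ 2 / 2) / 3.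

From HB Require Import structures.
From mathcomp Require Import all_boot all_order all_algebra.
From mathcomp Require Import classical_sets reals.
From mathcomp Require Import ring lra.
Import Order.TTheory GRing.Theory Num.Theory.
Local Open Scope ring_scope.

(* Since h is increasing, rho(x) = h(E/x) / h(F/x), and h(t/x) = t q_t(x) / x^3
   with q_t(x) = 3x^2 - 3tx + t^2.  As q_E = q_F + (F - E)(3x - E - F),
   maximizing rho amounts to maximizing (3x - E - F) / q_F(x).  At the
   critical point x0 of this ratio the parabola q_F lies above the line
   (3x - E - F)(2x0 - F) with contact of order two at x0, which bounds the
   ratio by its value 1 / (2x0 - F) at x0; x_opt is that critical point. *)

Section Rho.
Context {R : realType}.
Implicit Types a b t x E F : R.

Lemma h_fun_le a b : a <= b -> h_fun a <= h_fun b.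
Proof.
move=> ab; rewrite -subr_ge0.
have -> : h_fun b - h_fun a =
    (b - a) * ((1 - a + (1 - b) / 2) ^+ 2 + 3 / 4 * (1 - b) ^+ 2).
  by rewrite /h_fun; field.
rewrite mulr_ge0 ?subr_ge0 // addr_ge0 ?sqr_ge0 // mulr_ge0 ?sqr_ge0 //; lra.
Qed.

Lemma sup_h_image a b : a <= b -> sup (h_image a b) = h_fun b.
Proof.
move=> ab; have hb : h_image a b (h_fun b) by exists b => //=; rewrite ab lexx.
have ub : ubound (h_image a b) (h_fun b).
  by move=> y [z /= /andP[_ zb] <-]; apply: h_fun_le.
apply/le_anti; rewrite ge_sup //=; last by exists (h_fun b).
by apply: ub_le_sup => //; exists (h_fun b).
Qed.

Lemma inf_h_image a b : a <= b -> inf (h_image a b) = h_fun a.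
Proof.
move=> ab; have ha : h_image a b (h_fun a) by exists a => //=; rewrite ab lexx.
have lb : lbound (h_image a b) (h_fun a).
  by move=> y [z /= /andP[az _] <-]; apply: h_fun_le.
apply/le_anti; rewrite lb_le_inf //=; last by exists (h_fun a).
by rewrite andbT; apply: ge_inf => //; exists (h_fun a).
Qed.

Definition hquad t x : R := 3 * x ^+ 2 - 3 * t * x + t ^+ 2.

Lemma hquad_gt0 t x : t != 0 -> 0 < hquad t x.
Proof.
move=> t0; have -> : hquad t x = 3 * (x - t / 2) ^+ 2 + t ^+ 2 / 4.
  by rewrite /hquad; field.
apply: ltr_wpDl; first by rewrite mulr_ge0 ?sqr_ge0.
by rewrite divr_gt0 // exprn_even_gt0.
Qed.

Lemma h_fun_div t x : x != 0 -> h_fun (t / x) = t * hquad t x / x ^+ 3.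
Proof. by move=> x0; rewrite /h_fun /hquad; field. Qed.

Lemma hquadE E F x :
  hquad E x = hquad F x + (F - E) * (3 * x - (E + F)).
Proof. by rewrite /hquad; ring. Qed.

Lemma rhoE E F x : 0 < E < F -> 0 < x ->
  rho E F x = E / F * (1 + (F - E) * ((3 * x - (E + F)) / hquad F x)).
Proof.
move=> /andP[E0 EF] x0.
have F0 : F != 0 by rewrite gt_eqF //; lra.
have qF0 : hquad F x != 0 by rewrite gt_eqF // hquad_gt0.
have EFx : E / x <= F / x by rewrite ler_pM2r ?invr_gt0 // ltW.
rewrite /rho sup_h_image // inf_h_image // !h_fun_div ?gt_eqF // (hquadE E F).
by field; rewrite qF0 F0 gt_eqF.
Qed.

Section CriticalPoint.
Context {F s x0 : R}.
(* The critical-point equation of x |-> (3x - s) / q_F(x), after clearing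
   denominators; it is equivalent to q_F(x0) = (3x0 - s)(2x0 - F). *)
Hypothesis crit : 3 * x0 ^+ 2 - 2 * s * x0 - F ^+ 2 + s * F = 0.

Lemma hquad_tangent x :
  hquad F x = (3 * x - s) * (2 * x0 - F) + 3 * (x - x0) ^+ 2.
Proof.
apply/eqP; rewrite -subr_eq0 -oppr_eq0 -crit; apply/eqP.
by rewrite /hquad; ring.
Qed.

Lemma hquad_crit : hquad F x0 = (3 * x0 - s) * (2 * x0 - F).
Proof. by rewrite hquad_tangent subrr expr0n mulr0 addr0. Qed.

Lemma hquad_ratio_le x : F != 0 -> F / 2 < x0 ->
  (3 * x - s) / hquad F x <= (2 * x0 - F)^-1.
Proof.
move=> F0 Fx0.
rewrite ler_pdivrMr ?hquad_gt0 // ler_pdivlMl; last lra.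
by rewrite mulrC hquad_tangent lerDl mulr_ge0 ?sqr_ge0.
Qed.

End CriticalPoint.

Lemma x_optE E F :
  x_opt E F = (E + F + Num.sqrt (E ^+ 2 - E * F + F ^+ 2)) / 3.
Proof.
rewrite /x_opt; have -> : (E ^+ 2 + F ^+ 2) / 2 + (F - E) ^+ 2 / 2 =
  E ^+ 2 - E * F + F ^+ 2 by field.
by field.
Qed.

Lemma x_opt_crit E F : 0 < E < F ->
  [/\ 0 < 3 * x_opt E F - (E + F), F / 2 < x_opt E F &
      3 * x_opt E F ^+ 2 - 2 * (E + F) * x_opt E F - F ^+ 2 + (E + F) * F = 0].
Proof.
move=> /andP[E0 EF]; rewrite x_optE.
set r := Num.sqrt _.
have r2 : r ^+ 2 = E ^+ 2 - E * F + F ^+ 2.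
  rewrite sqr_sqrtr // (_ : _ - _ + _ = (F - E) ^+ 2 + E * F); last by ring.
  by rewrite addr_ge0 ?sqr_ge0 // mulr_ge0 //; lra.
have r0 : 0 <= r by apply: sqrtr_ge0.
have rFE : F - E < r by rewrite expr2 in r2; nra.
split; [lra | lra |].
rewrite (_ : _ - _ + _ = (r ^+ 2 - (E ^+ 2 - E * F + F ^+ 2)) / 3); last by field.
by rewrite r2 subrr mul0r.
Qed.

End Rho.

Theorem mainTheorem13 (R : realType) (E F : R) (hE : 0 < E) (hEF : E < F) :
  F / 2 < x_opt E F /\
  (forall x : R, F / 2 < x -> rho E F x <= rho E F (x_opt E F)).
Proof.
have EF : 0 < E < F by rewrite hE.
have [r0 Fxo crit] := x_opt_crit E F EF.
split=> // x Fx.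
have F0 : F != 0 by rewrite gt_eqF //; lra.
have [x0 xo0] : 0 < x /\ 0 < x_opt E F by split; lra.
rewrite !rhoE // ler_pM2l ?divr_gt0 //; last lra.
rewrite lerD2l ler_pM2l ?subr_gt0 // (hquad_crit crit) invfM mulVKf ?gt_eqF //.
exact: hquad_ratio_le.
Qed.
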